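(* Let $S$ be a semigroup, $I, J$ sets and $P$ a $J\times I$ matrix, and let $M$ be either $M(S; I, J; P)$ (entries of $P$ in $S$) or $M^0(S; I, J; P)$ (entries of $P$ in $S \cup \{0\}$), and suppose $M$ is finitely generated. Choose $i \in I$ and $j \in J$ with $P_{ji} \neq 0$ and let $T = \{(i, s, j) : s \in S\} \subseteq M$. If for every $j' \in J$ we have either $P_{j'i} = 0$ or $S P_{j'i} \subseteq S P_{ji}$, then $T$ is a pseudo-right-unitary subsemigroup of $M$.
   Context: The Rees matrix semigroup with zero $M^0(S; I, J; P)$ (where $0 \notin S$) has elements $(I \times S \times J) \cup \{0\}$, $0$ is a zero, and $(i_1, g_1, j_1)(i_2, g_2, j_2) = (i_1, g_1 P_{j_1 i_2} g_2, j_2)$ if $P_{j_1 i_2} \in S$ and $=0$ if $P_{j_1 i_2} = 0$. If $P$ has no zero entries, $M(S;I,J;P)$ is the subsemigroup $I \times S \times J$. A subsemigroup $T$ of a semigroup $M$ is pseudo-right-unitary if for every $a \in M$ there exists $b \in T$ such that $ax = bx$ for every $x \in T$ with $ax \in T$. *)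

From Stdlib Require Import List.

Inductive generated {X : Type} (op : X -> X -> X) (A : X -> Prop) : X -> Prop :=
  | gen_base : forall x, A x -> generated op A x
  | gen_mul : forall x y, generated op A x -> generated op A y -> generated op A (op x y).

Definition finitely_generated {X : Type} (op : X -> X -> X) : Prop :=
  exists l : list X, forall x, generated op (fun y => In y l) x.

Definition is_subsemigroup {X : Type} (op : X -> X -> X) (T : X -> Prop) : Prop :=
  forall x y, T x -> T y -> T (op x y).

Definition pseudo_right_unitary {X : Type} (op : X -> X -> X) (T : X -> Prop) : Prop :=
  is_subsemigroup op T /\
  forall a : X, exists b : X, T b /\
    forall x : X, T x -> T (op a x) -> op a x = op b x.

Definition rees_mul {S I J : Type} (mul : S -> S -> S) (P : J -> I -> S)
  (x y : I * S * J) : I * S * J :=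
  match x, y with
  | (i1, g1, j1), (i2, g2, j2) => (i1, mul (mul g1 (P j1 i2)) g2, j2)
  end.

(* Rees matrix semigroup with zero M^0(S; I, J; P): elements are
   option (I * S * J), None being the zero; P has entries in S u {0},
   encoded as option S with None = 0. *)
Definition rees0_mul {S I J : Type} (mul : S -> S -> S) (P : J -> I -> option S)
  (x y : option (I * S * J)) : option (I * S * J) :=
  match x, y with
  | Some (i1, g1, j1), Some (i2, g2, j2) =>
      match P j1 i2 with
      | Some p => Some (i1, mul (mul g1 p) g2, j2)
      | None => None
      end
  | _, _ => None
  end.

(** If [a = (i1, g1, j1)], then on elements of row [i] left multiplication by
    [a] depends only on [i1] and on [g1 P_{j1 i}].  The divisibility hypothesis
    rewrites [g1 P_{j1 i}] as [t P_{j i}], so [b = (i, t, j)] acts like [a]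
    wherever [a x] stays in [T] (which forces [i1 = i]).  In [M^0], if [a = 0]
    or [P_{j1 i} = 0] then [a x = 0] is never in [T] and any [b] in [T] works. *)
From Stdlib Require Import List.

Section ReesMatrix.

Variables (S I J : Type) (mul : S -> S -> S).

Definition rees_block (i : I) (j : J) (x : I * S * J) : Prop :=
  fst (fst x) = i /\ snd x = j.

Definition rees0_block (i : I) (j : J) (x : option (I * S * J)) : Prop :=
  exists s : S, x = Some (i, s, j).

Section WithoutZero.

Variable P : J -> I -> S.

Lemma rees_block_subsemigroup (i : I) (j : J) :
  is_subsemigroup (rees_mul mul P) (rees_block i j).
Proof.
  intros [[i1 g1] j1] [[i2 g2] j2] [Ei1 _] [_ Ej2]; simpl in *.
  split; assumption.
Qed.

Lemma rees_mul_row_eq (i i1 : I) (j1 j2 : J) (g1 g2 : S) (x : I * S * J) :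
  fst (fst x) = i -> mul g1 (P j1 i) = mul g2 (P j2 i) ->
  rees_mul mul P (i1, g1, j1) x = rees_mul mul P (i1, g2, j2) x.
Proof.
  destruct x as [[i' s] j']; simpl; intros -> E.
  rewrite E; reflexivity.
Qed.

Lemma rees_block_pseudo_right_unitary (i : I) (j : J) :
  (forall (j' : J) (s : S), exists t : S, mul s (P j' i) = mul t (P j i)) ->
  pseudo_right_unitary (rees_mul mul P) (rees_block i j).
Proof.
  intros Hdiv. split; [apply rees_block_subsemigroup |].
  intros [[i1 g1] j1]. destruct (Hdiv j1 g1) as [t Ht].
  exists (i, t, j). split; [split; reflexivity |].
  intros x [Ex _] Hax.
  assert (Ei1 : i1 = i) by (destruct x as [[? ?] ?]; apply Hax).
  subst i1. apply (rees_mul_row_eq i); assumption.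
Qed.

End WithoutZero.

Section WithZero.

Variable P : J -> I -> option S.

Lemma rees0_block_subsemigroup (i : I) (j : J) :
  P j i <> None -> is_subsemigroup (rees0_mul mul P) (rees0_block i j).
Proof.
  intros Hji x y [s ->] [s' ->]; simpl.
  destruct (P j i) as [p |]; [eexists; reflexivity | contradiction].
Qed.

Lemma rees0_mul_row_eq (i i1 : I) (j1 j2 j' : J) (g1 g2 s p1 p2 : S) :
  P j1 i = Some p1 -> P j2 i = Some p2 -> mul g1 p1 = mul g2 p2 ->
  rees0_mul mul P (Some (i1, g1, j1)) (Some (i, s, j'))
  = rees0_mul mul P (Some (i1, g2, j2)) (Some (i, s, j')).
Proof.
  simpl; intros -> -> E.
  rewrite E; reflexivity.
Qed.

Lemma rees0_mul_row_zero (i i1 : I) (j1 j' : J) (g1 s : S) :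
  P j1 i = None -> rees0_mul mul P (Some (i1, g1, j1)) (Some (i, s, j')) = None.
Proof.
  simpl; intros E.
  rewrite E; reflexivity.
Qed.

Lemma rees0_block_pseudo_right_unitary (i : I) (j : J) (p : S) :
  P j i = Some p ->
  (forall (j' : J) (p' s : S), P j' i = Some p' -> exists t : S, mul s p' = mul t p) ->
  pseudo_right_unitary (rees0_mul mul P) (rees0_block i j).
Proof.
  intros Hji Hdiv. split; [apply rees0_block_subsemigroup; congruence |].
  intros [[[i1 g1] j1] |].
  2: { exists (Some (i, p, j)). split; [eexists; reflexivity |].
       intros x _ [s Hs]; discriminate. }
  destruct (P j1 i) as [p1 |] eqn:E1.
  - destruct (Hdiv j1 p1 g1 E1) as [t Ht].
    exists (Some (i, t, j)). split; [eexists; reflexivity |].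
    intros x [s ->] [s' Hax]. simpl in Hax. rewrite E1 in Hax.
    injection Hax as -> _.
    apply (rees0_mul_row_eq i i j1 j j g1 t s p1 p); assumption.
  - exists (Some (i, p, j)). split; [eexists; reflexivity |].
    intros x [s ->] [s' Hax].
    rewrite rees0_mul_row_zero in Hax by exact E1.
    discriminate.
Qed.

End WithZero.

End ReesMatrix.

Theorem proposition5p1 :
  forall (S : Type) (mul : S -> S -> S)
    (mulA : forall a b c, mul a (mul b c) = mul (mul a b) c)
    (I J : Type),
  (* Case M = M(S; I, J; P) *)
  (forall (P : J -> I -> S) (i : I) (j : J),
     finitely_generated (rees_mul mul P) ->
     (forall j' : J, forall s : S, exists t : S, mul s (P j' i) = mul t (P j i)) ->
     pseudo_right_unitary (rees_mul mul P)
       (fun x : I * S * J => fst (fst x) = i /\ snd x = j))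
  /\
  (* Case M = M^0(S; I, J; P) *)
  (forall (P : J -> I -> option S) (i : I) (j : J),
     finitely_generated (rees0_mul mul P) ->
     P j i <> None ->
     (forall j' : J, P j' i = None \/
        (exists p' p : S, P j' i = Some p' /\ P j i = Some p /\
           forall s : S, exists t : S, mul s p' = mul t p)) ->
     pseudo_right_unitary (rees0_mul mul P)
       (fun x : option (I * S * J) => exists s : S, x = Some (i, s, j))).
Proof.
  intros S mul _ I J. split.
  - intros P i j _. apply rees_block_pseudo_right_unitary.
  - intros P i j _ Hji Hdiv.
    destruct (P j i) as [p |] eqn:Ep; [| contradiction].
    apply (rees0_block_pseudo_right_unitary S I J mul P i j p Ep).
    intros j' p' s Ej'.
    destruct (Hdiv j') as [E | (q' & q & Eq' & Eq & Hq)]; [congruence |].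
    rewrite Ej' in Eq'. injection Eq' as <-. injection Eq as <-.
    apply Hq.
Qed.
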